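(* For every $\Delta^0_2$ set $X$ with $\emptyset'\not\leq_T X$, there exists a $\Delta^0_2$ function $f:\omega\to\omega$ such that $X$ computes no function $g:\omega\to\omega$ with $g(x)\neq f(x)$ for all $x\in\omega$.
   Context: A set or function is $\Delta^0_2$ if it is computable from $\emptyset'$. A function $g$ with $g(x)\neq f(x)$ for all $x$ is called $f$-diagonalizing. *)

From Stdlib Require Import Arith Cantor ClassicalEpsilon.

Definition pair (x y : nat) : nat := Cantor.to_nat (x, y).
Definition unL (n : nat) : nat := fst (Cantor.of_nat n).
Definition unR (n : nat) : nat := snd (Cantor.of_nat n).

(* Syntax of oracle partial recursive functions (unary, via pairing). *)
Inductive prf : Type :=
| PZero : prf
| PSucc : prf
| PLeft : prf
| PRight : prf
| POracle : prf
| PPair : prf -> prf -> prf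
| PComp : prf -> prf -> prf
| PRec : prf -> prf -> prf
| PMu : prf -> prf.

Inductive eval (A : nat -> bool) : prf -> nat -> nat -> Prop :=
| ev_zero x : eval A PZero x 0
| ev_succ x : eval A PSucc x (S x)
| ev_left x : eval A PLeft x (unL x)
| ev_right x : eval A PRight x (unR x)
| ev_oracle x : eval A POracle x (if A x then 1 else 0)
| ev_pair f g x a b :
    eval A f x a -> eval A g x b -> eval A (PPair f g) x (pair a b)
| ev_comp f g x y z :
    eval A g x y -> eval A f y z -> eval A (PComp f g) x z
| ev_rec0 f g x y :
    eval A f x y -> eval A (PRec f g) (pair x 0) y
| ev_recS f g x n y z :
    eval A (PRec f g) (pair x n) y ->
    eval A g (pair x (pair n y)) z ->
    eval A (PRec f g) (pair x (S n)) z
| ev_mu f x n :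
    eval A f (pair x n) 0 ->
    (forall m, m < n -> exists k, eval A f (pair x m) (S k)) ->
    eval A (PMu f) x n.

Definition computable_in (A : nat -> bool) (f : nat -> nat) : Prop :=
  exists e : prf, forall x, eval A e x (f x).

Definition turing_red (B A : nat -> bool) : Prop :=
  computable_in A (fun x => if B x then 1 else 0).

(* Goedel numbering of programs (injective, computable, decidable image). *)
Fixpoint code (e : prf) : nat :=
  match e with
  | PZero => pair 0 0
  | PSucc => pair 1 0
  | PLeft => pair 2 0
  | PRight => pair 3 0
  | POracle => pair 4 0
  | PPair f g => pair 5 (pair (code f) (code g))
  | PComp f g => pair 6 (pair (code f) (code g))
  | PRec f g => pair 7 (pair (code f) (code g))
  | PMu f => pair 8 (code f)
  end.

Definition empty_set : nat -> bool := fun _ => false.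

Definition halts (A : nat -> bool) (e : prf) (x : nat) : Prop :=
  exists y, eval A e x y.

Definition in_jump0 (n : nat) : Prop :=
  exists e : prf, code e = n /\ halts empty_set e n.

(* Characteristic function of emptyset' (classical: the set is not decidable). *)
Definition jump0 : nat -> bool :=
  fun n => if excluded_middle_informative (in_jump0 n) then true else false.

Definition Delta02_set (X : nat -> bool) : Prop := turing_red X jump0.
Definition Delta02_fun (f : nat -> nat) : Prop := computable_in jump0 f.

Definition diagonalizing (f g : nat -> nat) : Prop := forall x, g x <> f x.

From Stdlib Require Import Arith Cantor ClassicalEpsilon Lia List Setoid.

(* Let [c] be a [jump0]-computable modulus of the halting set: each [n] in the halting set
   is seen to halt by stage [c n].  Put [f <e, n>] := the output of program [e] with oracle
   [X] on input [<e, n>] as seen by stage [c n]; since [X] is computable in [jump0], so is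
   [f].  If a total [g = Phi_e^X] diagonalized [f], the computation of [g <e, n>] would be
   seen at an [X]-computable stage [h n], and [h n > c n] for every [n], for otherwise
   [f <e, n> = g <e, n>].  But a function dominating the modulus computes the halting
   set, so [jump0 <=_T X].

   Stage-bounded computation is made primitive recursive through computation records:
   coded lists of triples (program, input, output), each justified by earlier triples
   through one rule of the semantics. *)

(** * Pairing and evaluation *)

Lemma unL_pair a b : unL (pair a b) = a.
Proof. unfold unL, pair. now rewrite cancel_of_to. Qed.

Lemma unR_pair a b : unR (pair a b) = b.
Proof. unfold unR, pair. now rewrite cancel_of_to. Qed.

Lemma pair_unL_unR n : pair (unL n) (unR n) = n.
Proof. unfold unL, unR, pair. rewrite <- surjective_pairing. apply cancel_to_of. Qed.

Ltac simpl_pair := repeat rewrite ?unL_pair, ?unR_pair in *.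

Lemma pair_inj a b c d : pair a b = pair c d -> a = c /\ b = d.
Proof.
  intros E. split; [rewrite <- (unL_pair a b), E | rewrite <- (unR_pair a b), E];
    now simpl_pair.
Qed.

Lemma add_le_pair a b : a + b <= pair a b.
Proof. unfold pair. pose proof (to_nat_non_decreasing a b). lia. Qed.

Lemma unL_le n : unL n <= n.
Proof. rewrite <- (pair_unL_unR n) at 2. pose proof (add_le_pair (unL n) (unR n)). lia. Qed.

Lemma unR_le n : unR n <= n.
Proof. rewrite <- (pair_unL_unR n) at 2. pose proof (add_le_pair (unL n) (unR n)). lia. Qed.

(* Tactics must never compute with the Cantor pairing. *)
Opaque pair.

Ltac inj_pair := repeat match goal with
  | H : pair _ _ = pair _ _ |- _ => apply pair_inj in H; destruct H; subst
  | H : S _ = S _ |- _ => injection H as H; subst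
  end.

(* Inverts an evaluation without letting [inversion] unfold [pair] in its input. *)
Ltac inv_eval H :=
  match type of H with eval _ _ ?i _ =>
    let i' := fresh "i" in remember i as i' eqn:Ei in H; inversion H; subst i'; subst
  end.

Section EvalNestedInd.
Variables (A : nat -> bool) (Q : prf -> nat -> nat -> Prop).
Hypothesis Q_zero : forall x, Q PZero x 0.
Hypothesis Q_succ : forall x, Q PSucc x (S x).
Hypothesis Q_left : forall x, Q PLeft x (unL x).
Hypothesis Q_right : forall x, Q PRight x (unR x).
Hypothesis Q_oracle : forall x, Q POracle x (if A x then 1 else 0).
Hypothesis Q_pair : forall f g x a b,
  eval A f x a -> Q f x a -> eval A g x b -> Q g x b -> Q (PPair f g) x (pair a b).
Hypothesis Q_comp : forall f g x y z,
  eval A g x y -> Q g x y -> eval A f y z -> Q f y z -> Q (PComp f g) x z.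
Hypothesis Q_rec0 : forall f g x y, eval A f x y -> Q f x y -> Q (PRec f g) (pair x 0) y.
Hypothesis Q_recS : forall f g x n y z,
  eval A (PRec f g) (pair x n) y -> Q (PRec f g) (pair x n) y ->
  eval A g (pair x (pair n y)) z -> Q g (pair x (pair n y)) z ->
  Q (PRec f g) (pair x (S n)) z.
Hypothesis Q_mu : forall f x n,
  eval A f (pair x n) 0 -> Q f (pair x n) 0 ->
  (forall m, m < n -> exists k, eval A f (pair x m) (S k) /\ Q f (pair x m) (S k)) ->
  Q (PMu f) x n.

Fixpoint eval_nested_ind e x y (H : eval A e x y) {struct H} : Q e x y :=
  match H in eval _ e x y return Q e x y with
  | ev_zero _ x => Q_zero x
  | ev_succ _ x => Q_succ x
  | ev_left _ x => Q_left x
  | ev_right _ x => Q_right x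
  | ev_oracle _ x => Q_oracle x
  | ev_pair _ f g x a b Hf Hg =>
      Q_pair f g x a b Hf (eval_nested_ind _ _ _ Hf) Hg (eval_nested_ind _ _ _ Hg)
  | ev_comp _ f g x y z Hg Hf =>
      Q_comp f g x y z Hg (eval_nested_ind _ _ _ Hg) Hf (eval_nested_ind _ _ _ Hf)
  | ev_rec0 _ f g x y Hf => Q_rec0 f g x y Hf (eval_nested_ind _ _ _ Hf)
  | ev_recS _ f g x n y z Hr Hg =>
      Q_recS f g x n y z Hr (eval_nested_ind _ _ _ Hr) Hg (eval_nested_ind _ _ _ Hg)
  | ev_mu _ f x n H0 Hlt =>
      Q_mu f x n H0 (eval_nested_ind _ _ _ H0)
        (fun m Hm => match Hlt m Hm with
                     | ex_intro _ k Hk => ex_intro _ k (conj Hk (eval_nested_ind _ _ _ Hk))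
                     end)
  end.
End EvalNestedInd.

Lemma eval_functional A e x y1 y2 : eval A e x y1 -> eval A e x y2 -> y1 = y2.
Proof.
  intros H. revert y2.
  induction H using eval_nested_ind; intros y2 H2; inv_eval H2; inj_pair;
    try discriminate; try lia; try (f_equal; auto; fail).
  - match goal with Hg : eval A g x ?w |- _ => rewrite (IHeval1 w Hg) in *; auto end.
  - match goal with Hr : eval A (PRec f g) (pair x n) ?w |- _ =>
      rewrite (IHeval1 w Hr) in *; auto end.
  - rename H0 into Hbelow.
    match goal with Hlt : forall m, m < y2 -> _, Hz : eval A f (pair x y2) 0 |- _ =>
      destruct (lt_eq_lt_dec n y2) as [[Hl|Hl]|Hl]; auto;
      [ destruct (Hlt _ Hl) as [k Hk]; discriminate (IHeval _ Hk)
      | destruct (Hbelow _ Hl) as [k [_ Hk]]; discriminate (Hk _ Hz) ] end.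
Qed.

Fixpoint natrec (F G : nat -> nat) (x n : nat) : nat :=
  match n with 0 => F x | S m => G (pair x (pair m (natrec F G x m))) end.

(** * μ-free programs *)

(* Total semantics; the [PMu] case is junk, and [eval_sem] holds for μ-free programs. *)
Fixpoint sem (A : nat -> bool) (P : prf) (x : nat) : nat :=
  match P with
  | PZero => 0
  | PSucc => S x
  | PLeft => unL x
  | PRight => unR x
  | POracle => if A x then 1 else 0
  | PPair f g => pair (sem A f x) (sem A g x)
  | PComp f g => sem A f (sem A g x)
  | PRec f g => natrec (sem A f) (sem A g) (unL x) (unR x)
  | PMu _ => 0
  end.

Fixpoint mufree (P : prf) : Prop :=
  match P with
  | PPair f g | PComp f g | PRec f g => mufree f /\ mufree g
  | PMu _ => False
  | _ => True
  end.

Lemma eval_sem A P x : mufree P -> eval A P x (sem A P x).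
Proof.
  revert x. induction P; simpl; intros x HP; try (constructor; fail); try tauto.
  - destruct HP; constructor; auto.
  - destruct HP; econstructor; eauto.
  - destruct HP as [Hf Hg]. rewrite <- (pair_unL_unR x). simpl_pair.
    induction (unR x); simpl; econstructor; eauto.
Qed.

Fixpoint subst_oracle (P q : prf) : prf :=
  match P with
  | POracle => q
  | PPair f g => PPair (subst_oracle f q) (subst_oracle g q)
  | PComp f g => PComp (subst_oracle f q) (subst_oracle g q)
  | PRec f g => PRec (subst_oracle f q) (subst_oracle g q)
  | PMu f => PMu (subst_oracle f q)
  | _ => P
  end.

Lemma eval_subst_oracle (A B : nat -> bool) q P x y :
  (forall x, eval A q x (if B x then 1 else 0)) ->
  eval B P x y -> eval A (subst_oracle P q) x y.
Proof.
  intros Hq H. induction H using eval_nested_ind; simpl; try constructor; auto.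
  - econstructor; eauto.
  - econstructor; eauto.
  - rename H0 into Hbelow. intros m Hm. destruct (Hbelow m Hm) as [k [_ Hk]]. eauto.
Qed.

Lemma sem_subst_oracle (A B : nat -> bool) q P x :
  (forall x, sem A q x = if B x then 1 else 0) -> mufree P ->
  sem A (subst_oracle P q) x = sem B P x.
Proof.
  intros Hq. revert x. induction P; simpl; intros x HP; auto; try tauto.
  - now rewrite IHP1, IHP2 by tauto.
  - now rewrite IHP2, IHP1 by tauto.
  - destruct HP as [Hf Hg]. generalize (unR x). induction n; simpl; auto.
    now rewrite IHn, IHP2.
Qed.

Lemma computable_in_sem A P : mufree P -> computable_in A (sem A P).
Proof. intros HP. exists P. intros x. now apply eval_sem. Qed.

Lemma computable_in_comp A F G :
  computable_in A F -> computable_in A G -> computable_in A (fun x => F (G x)).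
Proof. intros [f Hf] [g Hg]. exists (PComp f g). intros x. econstructor; eauto. Qed.

Lemma computable_in_pair A F G :
  computable_in A F -> computable_in A G -> computable_in A (fun x => pair (F x) (G x)).
Proof. intros [f Hf] [g Hg]. exists (PPair f g). intros x. now constructor. Qed.

Lemma computable_in_turing_red A B F :
  turing_red B A -> computable_in B F -> computable_in A F.
Proof.
  intros [q Hq] [e He]. exists (subst_oracle e q). intros x.
  now apply eval_subst_oracle with B.
Qed.

Lemma computable_in_ext A F G : (forall x, F x = G x) -> computable_in A F -> computable_in A G.
Proof. intros HFG [e He]. exists e. intros x. now rewrite <- HFG. Qed.

Fixpoint bexists (P : nat -> bool) (n : nat) : bool :=
  match n with 0 => false | S m => bexists P m || P m end.

Fixpoint bforall (P : nat -> bool) (n : nat) : bool :=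
  match n with 0 => true | S m => bforall P m && P m end.

Fixpoint last_below (P : nat -> bool) (n : nat) : nat :=
  match n with 0 => 0 | S m => if P m then m else last_below P m end.

Lemma bexists_spec P n : bexists P n = true <-> exists m, m < n /\ P m = true.
Proof.
  induction n as [|n IH]; simpl.
  - split; [discriminate | intros [m [Hm _]]; lia].
  - rewrite Bool.orb_true_iff, IH. split.
    + intros [[m [Hm Pm]] | Pn]; [exists m | exists n]; split; auto; lia.
    + intros [m [Hm Pm]]. destruct (Nat.eq_dec m n) as [->|Hne]; auto.
      left. exists m. split; auto; lia.
Qed.

Lemma bforall_spec P n : bforall P n = true <-> forall m, m < n -> P m = true.
Proof.
  induction n as [|n IH]; simpl.
  - split; auto. intros; lia.
  - rewrite Bool.andb_true_iff, IH. split.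
    + intros [H1 H2] m Hm. destruct (Nat.eq_dec m n) as [->|Hne]; auto. apply H1; lia.
    + intros H. split; auto.
Qed.

Lemma last_below_spec P n m :
  m < n -> P m = true -> last_below P n < n /\ P (last_below P n) = true.
Proof.
  induction n as [|n IH]; simpl; intros Hm Pm; [lia|].
  destruct (P n) eqn:Pn; [split; auto|].
  destruct (Nat.eq_dec m n) as [->|Hne]; [congruence|].
  destruct IH; auto; lia.
Qed.

Lemma last_below_ext P Q n : (forall m, P m = Q m) -> last_below P n = last_below Q n.
Proof. intros H. induction n as [|n IH]; simpl; auto. now rewrite H, IH. Qed.

Fixpoint encode_list (l : list nat) : nat :=
  match l with nil => 0 | a :: l => pair a (encode_list l) end.

Definition code_nth (L i : nat) : nat := unL (Nat.iter i unR L).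

Lemma code_nth_encode_list l i : i < length l -> code_nth (encode_list l) i = nth i l 0.
Proof.
  unfold code_nth. revert i. induction l as [|a l IH]; simpl; intros i Hi; [lia|].
  destruct i as [|i]; simpl.
  - now rewrite unL_pair.
  - rewrite <- IH by lia. now rewrite <- Nat.iter_succ, Nat.iter_succ_r, unR_pair.
Qed.

Lemma code_nth_le L i : code_nth L i <= L.
Proof.
  unfold code_nth. enough (Nat.iter i unR L <= L) by (pose proof (unL_le (Nat.iter i unR L)); lia).
  induction i as [|i IH]; simpl; auto. pose proof (unR_le (Nat.iter i unR L)). lia.
Qed.

(** * Primitive recursive combinators *)

Definition nonzero (n : nat) : bool := negb (n =? 0).

Lemma nonzero_b2n b : nonzero (Nat.b2n b) = b.
Proof. now destruct b. Qed.

Definition holds (A : nat -> bool) (P : prf) (x : nat) : Prop := nonzero (sem A P x) = true.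

Local Infix "∘" := PComp (at level 40, left associativity).

Definition PId : prf := PPair PLeft PRight.

Fixpoint PConst (k : nat) : prf :=
  match k with 0 => PZero | S k => PSucc ∘ PConst k end.

Definition PPred : prf := PRec PZero (PLeft ∘ PRight) ∘ PPair PZero PId.
Definition PPlus : prf := PRec PId (PSucc ∘ PRight ∘ PRight).
Definition PMonus : prf := PRec PId (PPred ∘ PRight ∘ PRight).
Definition PIsZero : prf := PRec (PConst 1) PZero ∘ PPair PZero PId.

Definition PNot (f : prf) : prf := PIsZero ∘ f.
Definition PAdd (f g : prf) : prf := PPlus ∘ PPair f g.
Definition PLt (f g : prf) : prf := PMonus ∘ PPair g f.
Definition PEq (f g : prf) : prf := PIsZero ∘ PAdd (PMonus ∘ PPair f g) (PMonus ∘ PPair g f).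
Definition PAnd (f g : prf) : prf := PNot (PAdd (PNot f) (PNot g)).
Definition POr (f g : prf) : prf := PNot (PNot (PAdd f g)).
Definition PIf (b u v : prf) : prf := PRec PRight (PLeft ∘ PLeft) ∘ PPair (PPair u v) b.

(* Bounded search: the recursion runs over [m < bound x], calling [body] on [pair x m]. *)
Definition PBex (body bound : prf) : prf :=
  PRec PZero (POr (PRight ∘ PRight) (body ∘ PPair PLeft (PLeft ∘ PRight)))
  ∘ PPair PId bound.
Definition PBall (body bound : prf) : prf :=
  PRec (PConst 1) (PAnd (PRight ∘ PRight) (body ∘ PPair PLeft (PLeft ∘ PRight)))
  ∘ PPair PId bound.
Definition PLast (body bound : prf) : prf :=
  PRec PZero (PIf (body ∘ PPair PLeft (PLeft ∘ PRight)) (PLeft ∘ PRight) (PRight ∘ PRight))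
  ∘ PPair PId bound.
Definition PNth (l i : prf) : prf := PLeft ∘ PRec PId (PRight ∘ PRight ∘ PRight) ∘ PPair l i.

Lemma mufree_PConst k : mufree (PConst k).
Proof. induction k; simpl; tauto. Qed.

Ltac solve_mufree := cbv -[PConst]; repeat split; apply mufree_PConst.

Section Combinators.
Variable A : nat -> bool.

Lemma sem_PId x : sem A PId x = x.
Proof. apply pair_unL_unR. Qed.

Lemma sem_PConst k x : sem A (PConst k) x = k.
Proof. induction k; simpl; auto. Qed.

Lemma sem_PPred x : sem A PPred x = pred x.
Proof.
  unfold PPred. cbn [sem]. rewrite sem_PId. simpl_pair. destruct x; simpl; now simpl_pair.
Qed.

Lemma sem_PPlus x : sem A PPlus x = unL x + unR x.
Proof.
  unfold PPlus. cbn [sem]. induction (unR x); cbn [natrec sem]; simpl_pair; rewrite ?sem_PId; lia.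
Qed.

Lemma sem_PMonus x : sem A PMonus x = unL x - unR x.
Proof.
  unfold PMonus. cbn [sem].
  induction (unR x); cbn [natrec sem]; simpl_pair; rewrite ?sem_PId, ?sem_PPred; lia.
Qed.

Lemma sem_PIsZero x : sem A PIsZero x = Nat.b2n (x =? 0).
Proof. unfold PIsZero. cbn [sem]. rewrite sem_PId. simpl_pair. now destruct x. Qed.

Lemma sem_PAdd f g x : sem A (PAdd f g) x = sem A f x + sem A g x.
Proof. unfold PAdd. cbn [sem]. rewrite sem_PPlus. now simpl_pair. Qed.

Lemma sem_PNot f x : sem A (PNot f) x = Nat.b2n (negb (nonzero (sem A f x))).
Proof. unfold PNot, nonzero. cbn [sem]. rewrite sem_PIsZero. now destruct (sem A f x). Qed.

Lemma sem_PAnd f g x : sem A (PAnd f g) x = Nat.b2n (nonzero (sem A f x) && nonzero (sem A g x)).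
Proof.
  unfold PAnd. rewrite sem_PNot, sem_PAdd, !sem_PNot.
  now destruct (nonzero (sem A f x)), (nonzero (sem A g x)).
Qed.

Lemma sem_POr f g x : sem A (POr f g) x = Nat.b2n (nonzero (sem A f x) || nonzero (sem A g x)).
Proof.
  unfold POr, nonzero. rewrite !sem_PNot, sem_PAdd. unfold nonzero.
  now destruct (sem A f x), (sem A g x).
Qed.

Lemma sem_PIf b u v x :
  sem A (PIf b u v) x = if nonzero (sem A b x) then sem A u x else sem A v x.
Proof. unfold PIf, nonzero. cbn [sem]. simpl_pair. now destruct (sem A b x); simpl; simpl_pair. Qed.

Lemma sem_PBex body bound x :
  sem A (PBex body bound) x =
  Nat.b2n (bexists (fun m => nonzero (sem A body (pair x m))) (sem A bound x)).
Proof.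
  unfold PBex. cbn [sem]. simpl_pair. rewrite sem_PId.
  induction (sem A bound x); cbn [natrec bexists]; auto.
  rewrite sem_POr. cbn [sem]. simpl_pair. now rewrite IHn, nonzero_b2n.
Qed.

Lemma sem_PBall body bound x :
  sem A (PBall body bound) x =
  Nat.b2n (bforall (fun m => nonzero (sem A body (pair x m))) (sem A bound x)).
Proof.
  unfold PBall. cbn [sem]. simpl_pair. rewrite sem_PId.
  induction (sem A bound x); cbn [natrec bforall]; auto.
  rewrite sem_PAnd. cbn [sem]. simpl_pair. now rewrite IHn, nonzero_b2n.
Qed.

Lemma sem_PLast body bound x :
  sem A (PLast body bound) x =
  last_below (fun m => nonzero (sem A body (pair x m))) (sem A bound x).
Proof.
  unfold PLast. cbn [sem]. simpl_pair. rewrite sem_PId.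
  induction (sem A bound x); cbn [natrec last_below]; auto.
  rewrite sem_PIf. cbn [sem]. simpl_pair. now rewrite IHn.
Qed.

Lemma sem_PNth l i x : sem A (PNth l i) x = code_nth (sem A l x) (sem A i x).
Proof.
  unfold PNth, code_nth. cbn [sem]. simpl_pair. f_equal.
  induction (sem A i x) as [|n IH]; cbn [natrec sem]; simpl_pair; rewrite ?sem_PId; auto.
  now rewrite IH, Nat.iter_succ.
Qed.

Lemma holds_PComp f g x : holds A (f ∘ g) x <-> holds A f (sem A g x).
Proof. reflexivity. Qed.

Lemma holds_nonzero P x : holds A P x <-> nonzero (sem A P x) = true.
Proof. reflexivity. Qed.

Lemma holds_POracle x : holds A POracle x <-> A x = true.
Proof. unfold holds. simpl. now destruct (A x). Qed.

Lemma holds_PNot f x : holds A (PNot f) x <-> ~ holds A f x.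
Proof.
  unfold holds. rewrite sem_PNot, nonzero_b2n.
  destruct (nonzero (sem A f x)); simpl; split; congruence.
Qed.

Lemma sem_PNot_eq_0 f x : sem A (PNot f) x = 0 <-> holds A f x.
Proof.
  unfold holds. rewrite sem_PNot. destruct (nonzero (sem A f x)); simpl; split; congruence.
Qed.

Lemma holds_subst_oracle_zero P x :
  mufree P -> holds A (subst_oracle P PZero) x <-> holds empty_set P x.
Proof. intros HP. unfold holds. now rewrite sem_subst_oracle with (B := empty_set). Qed.

Lemma holds_PAnd f g x : holds A (PAnd f g) x <-> holds A f x /\ holds A g x.
Proof. unfold holds. rewrite sem_PAnd, nonzero_b2n. apply Bool.andb_true_iff. Qed.

Lemma holds_POr f g x : holds A (POr f g) x <-> holds A f x \/ holds A g x.
Proof. unfold holds. rewrite sem_POr, nonzero_b2n. apply Bool.orb_true_iff. Qed.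

Lemma holds_PEq f g x : holds A (PEq f g) x <-> sem A f x = sem A g x.
Proof.
  unfold holds, PEq. cbn [sem]. rewrite sem_PIsZero, sem_PAdd. cbn [sem].
  rewrite !sem_PMonus. simpl_pair. rewrite nonzero_b2n, Nat.eqb_eq. lia.
Qed.

Lemma holds_PLt f g x : holds A (PLt f g) x <-> sem A f x < sem A g x.
Proof.
  unfold holds, PLt, nonzero. cbn [sem]. rewrite sem_PMonus. simpl_pair.
  destruct (sem A g x - sem A f x) eqn:E; simpl; split; intros; try lia; discriminate.
Qed.

Lemma holds_PBex body bound x :
  holds A (PBex body bound) x <-> exists m, m < sem A bound x /\ holds A body (pair x m).
Proof. unfold holds. rewrite sem_PBex, nonzero_b2n. apply bexists_spec. Qed.

Lemma holds_PBall body bound x :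
  holds A (PBall body bound) x <-> forall m, m < sem A bound x -> holds A body (pair x m).
Proof. unfold holds. rewrite sem_PBall, nonzero_b2n. apply bforall_spec. Qed.

End Combinators.

(* [setoid_rewrite sem_PId] would leave the oracle as an unresolved evar, hence the plain
   [rewrite] for it. *)
Ltac simpl_sem :=
  repeat first [ progress cbn [sem] | progress rewrite ?sem_PId | setoid_rewrite sem_PConst
               | setoid_rewrite sem_PPred | setoid_rewrite sem_PNth
               | setoid_rewrite unL_pair | setoid_rewrite unR_pair ].

(* Otherwise unification unfolds [holds] when rewriting with the lemmas above and may
   start computing [sem]. *)
Opaque holds.

Lemma computable_in_search A P (R : nat -> nat -> Prop) :
  mufree P -> (forall x n, holds A P (pair x n) <-> R x n) ->
  (forall x, exists n, R x n) ->
  exists F, computable_in A F /\ forall x, R x (F x).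
Proof.
  intros HP HR Htot.
  assert (HP' : mufree (PNot P)) by (simpl; tauto).
  assert (Hzero : forall x n, sem A (PNot P) (pair x n) = 0 <-> R x n).
  { intros x n. now rewrite <- HR, sem_PNot_eq_0. }
  assert (Hmu : forall x, exists n, eval A (PMu (PNot P)) x n).
  { intros x. destruct (dec_inh_nat_subset_has_unique_least_element
      (fun n => sem A (PNot P) (pair x n) = 0)) as [n [[Hn Hmin] _]].
    - intros n. apply Nat.eq_decidable.
    - destruct (Htot x) as [n Hn]. exists n. now apply Hzero.
    - exists n. constructor.
      + rewrite <- Hn. now apply eval_sem.
      + intros m Hm. destruct (sem A (PNot P) (pair x m)) as [|k] eqn:E.
        * specialize (Hmin m E). lia.
        * exists k. rewrite <- E. now apply eval_sem. }
  exists (fun x => proj1_sig (constructive_indefinite_description _ (Hmu x))). split.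
  - exists (PMu (PNot P)). intros x. apply proj2_sig.
  - intros x. destruct (constructive_indefinite_description _ (Hmu x)) as [n Hn]; simpl.
    apply Hzero. inv_eval Hn. eapply eval_functional; eauto using eval_sem.
Qed.

(** * Computation records *)

(* Evaluation on numeric codes.  Tag 9 is not a program constructor: [pair 9 d] is
   related to everything exactly when [d] is the code of a program. *)
Inductive code_eval (A : nat -> bool) : nat -> nat -> nat -> Prop :=
| ce_zero x : code_eval A (pair 0 0) x 0
| ce_succ x : code_eval A (pair 1 0) x (S x)
| ce_left x : code_eval A (pair 2 0) x (unL x)
| ce_right x : code_eval A (pair 3 0) x (unR x)
| ce_oracle x : code_eval A (pair 4 0) x (if A x then 1 else 0)
| ce_pair a b x y1 y2 :
    code_eval A a x y1 -> code_eval A b x y2 -> code_eval A (pair 5 (pair a b)) x (pair y1 y2)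
| ce_comp a b x w y :
    code_eval A b x w -> code_eval A a w y -> code_eval A (pair 6 (pair a b)) x y
| ce_rec0 a b x y : code_eval A a x y -> code_eval A (pair 7 (pair a b)) (pair x 0) y
| ce_recS a b x n r y :
    code_eval A (pair 7 (pair a b)) (pair x n) r -> code_eval A b (pair x (pair n r)) y ->
    code_eval A (pair 7 (pair a b)) (pair x (S n)) y
| ce_mu a x n :
    code_eval A a (pair x n) 0 ->
    (forall m, m < n -> exists k, code_eval A a (pair x m) (S k)) ->
    code_eval A (pair 8 a) x n
| ce_code P x y : code_eval A (pair 9 (code P)) x y.

Lemma code_eval_eval A : forall c x y, code_eval A c x y -> forall E, code E = c -> eval A E x y.
Proof.
  fix IH 4. intros c x y H. destruct H; intros E HE; destruct E; simpl in HE; inj_pair;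
    try discriminate.
  1-5: constructor.
  - constructor; eapply IH; eauto.
  - econstructor; eapply IH; eauto.
  - constructor; eapply IH; eauto.
  - econstructor; eapply IH; eauto.
  - constructor; [eapply IH; eauto|].
    intros m Hm. destruct (H0 m Hm) as [k Hk]. exists k. eapply IH; eauto.
Qed.

Lemma code_eval_code A d x y : code_eval A (pair 9 d) x y -> exists E, code E = d.
Proof.
  intros H. remember (pair 9 d) as c eqn:Ec. destruct H; inj_pair; try discriminate. eauto.
Qed.

(* [j] follows by one rule of [code_eval] from premises satisfying [M]. *)
Definition justified (A : nat -> bool) (M : nat -> Prop) (j : nat) : Prop :=
  let c := unL j in let x := unL (unR j) in let y := unR (unR j) in
  let tag := unL c in let arg := unR c in
  (tag = 0 /\ arg = 0 /\ y = 0) \/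
  (tag = 1 /\ arg = 0 /\ y = S x) \/
  (tag = 2 /\ arg = 0 /\ y = unL x) \/
  (tag = 3 /\ arg = 0 /\ y = unR x) \/
  (tag = 4 /\ arg = 0 /\ y = (if A x then 1 else 0)) \/
  (tag = 5 /\ M (pair (unL arg) (pair x (unL y))) /\ M (pair (unR arg) (pair x (unR y)))) \/
  (tag = 6 /\ exists w, M (pair (unR arg) (pair x w)) /\ M (pair (unL arg) (pair w y))) \/
  (tag = 7 /\ unR x = 0 /\ M (pair (unL arg) (pair (unL x) y))) \/
  (tag = 7 /\ 0 < unR x /\ exists r, M (pair c (pair (pair (unL x) (pred (unR x))) r)) /\
     M (pair (unR arg) (pair (pair (unL x) (pair (pred (unR x)) r)) y))) \/
  (tag = 8 /\ M (pair arg (pair (pair x y) 0)) /\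
     forall m, m < y -> exists k, M (pair arg (pair (pair x m) (S k)))) \/
  (tag = 9 /\ unR arg = 0 /\ unL arg < 5) \/
  (tag = 9 /\ 4 < unL arg < 8 /\ (exists z, M (pair (pair 9 (unL (unR arg))) z)) /\
     exists z, M (pair (pair 9 (unR (unR arg))) z)) \/
  (tag = 9 /\ unL arg = 8 /\ exists z, M (pair (pair 9 (unR arg)) z)).

Lemma justified_mono A (M M' : nat -> Prop) j :
  (forall v, M v -> M' v) -> justified A M j -> justified A M' j.
Proof.
  intros HM H. unfold justified in *. cbv zeta in *.
  repeat match type of H with _ \/ _ => destruct H as [H|H] end;
  [left | do 1 right; left | do 2 right; left | do 3 right; left | do 4 right; left
  | do 5 right; left | do 6 right; left | do 7 right; left | do 8 right; left
  | do 9 right; left | do 10 right; left | do 11 right; left | do 12 right];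
  firstorder.
Qed.

Definition correct_entry (A : nat -> bool) (j : nat) : Prop :=
  code_eval A (unL j) (unL (unR j)) (unR (unR j)).

Lemma correct_entry_pair A c x y : correct_entry A (pair c (pair x y)) <-> code_eval A c x y.
Proof. unfold correct_entry. now simpl_pair. Qed.

Lemma certificate_sound A (M : nat -> Prop) a x y :
  (forall d z, M (pair (pair 9 d) z) -> exists E, code E = d) ->
  (unR a = 0 /\ unL a < 5) \/
  (4 < unL a < 8 /\ (exists z, M (pair (pair 9 (unL (unR a))) z)) /\
     exists z, M (pair (pair 9 (unR (unR a))) z)) \/
  (unL a = 8 /\ exists z, M (pair (pair 9 (unR a)) z)) ->
  code_eval A (pair 9 a) x y.
Proof.
  intros Hcode [[Ha Hlt] | [[Hlt [[z1 Z1] [z2 Z2]]] | [Ha [z Z]]]].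
  - rewrite <- (pair_unL_unR a), Ha.
    destruct (unL a) as [|[|[|[|[|]]]]]; try lia.
    + apply (ce_code A PZero).
    + apply (ce_code A PSucc).
    + apply (ce_code A PLeft).
    + apply (ce_code A PRight).
    + apply (ce_code A POracle).
  - destruct (Hcode _ _ Z1) as [E1 E1c]. destruct (Hcode _ _ Z2) as [E2 E2c].
    rewrite <- (pair_unL_unR a), <- (pair_unL_unR (unR a)), <- E1c, <- E2c.
    destruct (unL a) as [|[|[|[|[|[|[|[|]]]]]]]]; try lia.
    + apply (ce_code A (PPair E1 E2)).
    + apply (ce_code A (PComp E1 E2)).
    + apply (ce_code A (PRec E1 E2)).
  - destruct (Hcode _ _ Z) as [E1 E1c].
    rewrite <- (pair_unL_unR a), Ha, <- E1c. apply (ce_code A (PMu E1)).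
Qed.

Lemma justified_sound A (M : nat -> Prop) j :
  (forall v, M v -> correct_entry A v) -> justified A M j -> correct_entry A j.
Proof.
  intros HM H. unfold justified in H. cbv zeta in H.
  rewrite <- (pair_unL_unR j), <- (pair_unL_unR (unR j)), <- (pair_unL_unR (unL j)) in *.
  set (t := unL (unL j)) in *. set (a := unR (unL j)) in *.
  set (x := unL (unR j)) in *. set (y := unR (unR j)) in *. clearbody t a x y.
  simpl_pair. apply correct_entry_pair.
  assert (HM' : forall c x y, M (pair c (pair x y)) -> code_eval A c x y)
    by (intros; apply correct_entry_pair; auto).
  destruct H as [[-> [-> ->]] | [[-> [-> ->]] | [[-> [-> ->]] | [[-> [-> ->]] |
                 [[-> [-> ->]] | H]]]]]; try constructor.
  destruct H as [[-> [Ha Hb]] | [[-> [w [Hb Ha]]] | [[-> [Hx Ha]] | [[-> [Hx [r [Hr Hb]]]] | H]]]].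
  - rewrite <- (pair_unL_unR a), <- (pair_unL_unR y). constructor; auto.
  - rewrite <- (pair_unL_unR a). econstructor; eauto.
  - rewrite <- (pair_unL_unR a), <- (pair_unL_unR x), Hx. constructor; auto.
  - rewrite <- (pair_unL_unR a) in Hr |- *. rewrite <- (pair_unL_unR x).
    destruct (unR x) as [|n]; [lia|]. simpl in *. econstructor; eauto.
  - destruct H as [[-> [H0 Hlt]] | [[-> H] | [[-> H] | [-> H]]]].
    { constructor; auto. intros m Hm. destruct (Hlt m Hm) as [k Hk]. exists k. auto. }
    all: apply (certificate_sound A M); [|tauto].
    all: intros d z Hz; rewrite <- (pair_unL_unR z) in Hz; eapply code_eval_code, HM', Hz.
Qed.

(* Programs reading a justification query [pair L (pair i j)]: the record [L] (a coded
   list), the position [i] of the entry [j], and the components of [j]. *)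
Definition PList : prf := PLeft.
Definition PIndex : prf := PLeft ∘ PRight.
Definition PEntry : prf := PRight ∘ PRight.
Definition PCodeOf : prf := PLeft ∘ PEntry.
Definition PInput : prf := PLeft ∘ PRight ∘ PEntry.
Definition POutput : prf := PRight ∘ PRight ∘ PEntry.
Definition PTag : prf := PLeft ∘ PCodeOf.
Definition PArg : prf := PRight ∘ PCodeOf.

(* Inside a bounded search the input is [pair u m]; [PEntryAt r] is the [m]-th entry of
   the record of the query [r u]. *)
Definition PEntryAt (r : prf) : prf := PNth (PList ∘ r) PRight.

Definition PEarlier (r V : prf) : prf :=
  PBex (PEq (PEntryAt (r ∘ PLeft)) (V ∘ PLeft)) (PIndex ∘ r).
Definition PCertified (r V : prf) : prf :=
  PBex (PEq (PLeft ∘ PEntryAt (r ∘ PLeft)) (PPair (PConst 9) (V ∘ PLeft))) (PIndex ∘ r).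

Definition PJustBase (n : nat) (V : prf) : prf :=
  PAnd (PEq PTag (PConst n)) (PAnd (PEq PArg PZero) (PEq POutput V)).

Definition PJustPair : prf :=
  PAnd (PEq PTag (PConst 5))
    (PAnd (PEarlier PId (PPair (PLeft ∘ PArg) (PPair PInput (PLeft ∘ POutput))))
          (PEarlier PId (PPair (PRight ∘ PArg) (PPair PInput (PRight ∘ POutput))))).

Definition PJustComp : prf :=
  PAnd (PEq PTag (PConst 6)) (PBex
    (PAnd (PEq (PLeft ∘ PEntryAt PLeft) (PRight ∘ PArg ∘ PLeft))
    (PAnd (PEq (PLeft ∘ PRight ∘ PEntryAt PLeft) (PInput ∘ PLeft))
          (PEarlier PLeft (PPair (PLeft ∘ PArg ∘ PLeft)
                                 (PPair (PRight ∘ PRight ∘ PEntryAt PLeft) (POutput ∘ PLeft))))))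
    PIndex).

Definition PJustRec0 : prf :=
  PAnd (PEq PTag (PConst 7)) (PAnd (PEq (PRight ∘ PInput) PZero)
    (PEarlier PId (PPair (PLeft ∘ PArg) (PPair (PLeft ∘ PInput) POutput)))).

Definition PJustRecS : prf :=
  PAnd (PEq PTag (PConst 7)) (PAnd (PLt PZero (PRight ∘ PInput)) (PBex
    (PAnd (PEq (PLeft ∘ PEntryAt PLeft) (PCodeOf ∘ PLeft))
    (PAnd (PEq (PLeft ∘ PRight ∘ PEntryAt PLeft)
               (PPair (PLeft ∘ PInput ∘ PLeft) (PPred ∘ PRight ∘ PInput ∘ PLeft)))
          (PEarlier PLeft (PPair (PRight ∘ PArg ∘ PLeft)
             (PPair (PPair (PLeft ∘ PInput ∘ PLeft)
                           (PPair (PPred ∘ PRight ∘ PInput ∘ PLeft)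
                                  (PRight ∘ PRight ∘ PEntryAt PLeft)))
                    (POutput ∘ PLeft))))))
    PIndex)).

Definition PJustMu : prf :=
  PAnd (PEq PTag (PConst 8))
    (PAnd (PEarlier PId (PPair PArg (PPair (PPair PInput POutput) PZero)))
          (PBall (PBex
             (PAnd (PEq (PLeft ∘ PEntryAt (PLeft ∘ PLeft)) (PArg ∘ PLeft ∘ PLeft))
             (PAnd (PEq (PLeft ∘ PRight ∘ PEntryAt (PLeft ∘ PLeft))
                        (PPair (PInput ∘ PLeft ∘ PLeft) (PRight ∘ PLeft)))
                   (PLt PZero (PRight ∘ PRight ∘ PEntryAt (PLeft ∘ PLeft)))))
             (PIndex ∘ PLeft))
           POutput)).

Definition PJustCodeBase : prf :=
  PAnd (PEq PTag (PConst 9)) (PAnd (PEq (PRight ∘ PArg) PZero) (PLt (PLeft ∘ PArg) (PConst 5))).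

Definition PJustCodeBin : prf :=
  PAnd (PEq PTag (PConst 9))
    (PAnd (PLt (PConst 4) (PLeft ∘ PArg)) (PAnd (PLt (PLeft ∘ PArg) (PConst 8))
    (PAnd (PCertified PId (PLeft ∘ PRight ∘ PArg))
          (PCertified PId (PRight ∘ PRight ∘ PArg))))).

Definition PJustCodeMu : prf :=
  PAnd (PEq PTag (PConst 9))
    (PAnd (PEq (PLeft ∘ PArg) (PConst 8)) (PCertified PId (PRight ∘ PArg))).

Definition PJustified : prf :=
  POr (PJustBase 0 PZero) (POr (PJustBase 1 (PSucc ∘ PInput)) (POr (PJustBase 2 (PLeft ∘ PInput))
  (POr (PJustBase 3 (PRight ∘ PInput)) (POr (PJustBase 4 (POracle ∘ PInput))
  (POr PJustPair (POr PJustComp (POr PJustRec0 (POr PJustRecS (POr PJustMu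
  (POr PJustCodeBase (POr PJustCodeBin PJustCodeMu))))))))))).

Ltac norm_query :=
  unfold PTag, PArg, PCodeOf, PInput, POutput, PEntry, PIndex, PList, PEntryAt; simpl_sem.

Lemma holds_PEarlier A r V u :
  holds A (PEarlier r V) u <->
  exists m, m < unL (unR (sem A r u)) /\ code_nth (unL (sem A r u)) m = sem A V u.
Proof.
  unfold PEarlier. rewrite holds_PBex. setoid_rewrite holds_PEq. norm_query. reflexivity.
Qed.

Lemma holds_PCertified A r V u :
  holds A (PCertified r V) u <->
  exists m, m < unL (unR (sem A r u)) /\ unL (code_nth (unL (sem A r u)) m) = pair 9 (sem A V u).
Proof.
  unfold PCertified. rewrite holds_PBex. setoid_rewrite holds_PEq. norm_query. reflexivity.
Qed.

Definition earlier (L i v : nat) : Prop := exists m, m < i /\ code_nth L m = v.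

Lemma pair_components n : n = pair (unL n) (pair (unL (unR n)) (unR (unR n))).
Proof. now rewrite !pair_unL_unR. Qed.

Section Justification.
Variables (A : nat -> bool) (L i j : nat).
Let M := earlier L i.
Let R := pair L (pair i j).
Let c := unL j.
Let x := unL (unR j).
Let y := unR (unR j).
Let tag := unL c.
Let arg := unR c.

Lemma holds_PJustBase n V : holds A (PJustBase n V) R <-> tag = n /\ arg = 0 /\ y = sem A V R.
Proof. unfold PJustBase. rewrite !holds_PAnd, !holds_PEq. unfold R; norm_query. reflexivity. Qed.

Lemma holds_PJustPair : holds A PJustPair R <->
  tag = 5 /\ M (pair (unL arg) (pair x (unL y))) /\ M (pair (unR arg) (pair x (unR y))).
Proof. unfold PJustPair. rewrite !holds_PAnd, !holds_PEq, !holds_PEarlier. unfold R; norm_query.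
  reflexivity.
Qed.


Lemma holds_PJustComp : holds A PJustComp R <->
  tag = 6 /\ exists w, M (pair (unR arg) (pair x w)) /\ M (pair (unL arg) (pair w y)).
Proof.
  unfold PJustComp. rewrite holds_PAnd, holds_PEq, holds_PBex.
  setoid_rewrite holds_PAnd. setoid_rewrite holds_PAnd. setoid_rewrite holds_PEq.
  setoid_rewrite holds_PEarlier. unfold R. norm_query. unfold M, earlier, x, y, arg, tag, c.
  split; intros [Ht H]; split; auto.
  - destruct H as [m [Hm [H1 [H2 H3]]]]. exists (unR (unR (code_nth L m))). split; auto.
    exists m. split; auto. rewrite (pair_components (code_nth L m)) at 1. now rewrite H1, H2.
  - destruct H as [w [[m [Hm Em]] H2]]. exists m. rewrite Em. norm_query. auto.
Qed.

Lemma holds_PJustRec0 : holds A PJustRec0 R <->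
  tag = 7 /\ unR x = 0 /\ M (pair (unL arg) (pair (unL x) y)).
Proof.
  unfold PJustRec0. rewrite !holds_PAnd, holds_PEq, holds_PEq, holds_PEarlier.
  unfold R. norm_query. reflexivity.
Qed.

Lemma holds_PJustRecS : holds A PJustRecS R <->
  tag = 7 /\ 0 < unR x /\ exists r, M (pair c (pair (pair (unL x) (pred (unR x))) r)) /\
    M (pair (unR arg) (pair (pair (unL x) (pair (pred (unR x)) r)) y)).
Proof.
  unfold PJustRecS. rewrite !holds_PAnd, holds_PEq, holds_PLt, holds_PBex.
  setoid_rewrite holds_PAnd. setoid_rewrite holds_PAnd. setoid_rewrite holds_PEq.
  setoid_rewrite holds_PEarlier. unfold R. norm_query. unfold M, earlier, x, y, arg, tag, c.
  split; intros [Ht [Hn H]]; repeat split; auto.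
  - destruct H as [m [Hm [H1 [H2 H3]]]]. exists (unR (unR (code_nth L m))). split; auto.
    exists m. split; auto. rewrite (pair_components (code_nth L m)) at 1. now rewrite H1, H2.
  - destruct H as [r [[m [Hm Em]] H2]]. exists m. rewrite Em. norm_query. auto.
Qed.

Lemma holds_PJustMu : holds A PJustMu R <->
  tag = 8 /\ M (pair arg (pair (pair x y) 0)) /\
  forall m, m < y -> exists k, M (pair arg (pair (pair x m) (S k))).
Proof.
  unfold PJustMu. rewrite !holds_PAnd, holds_PEq, holds_PEarlier, holds_PBall.
  setoid_rewrite holds_PBex. setoid_rewrite holds_PAnd. setoid_rewrite holds_PAnd.
  setoid_rewrite holds_PEq. setoid_rewrite holds_PLt. unfold R. norm_query.
  unfold M, earlier, x, y, arg, tag, c.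
  split; intros [Ht [H0 H]]; split; auto; split; auto.
  - intros m Hm. destruct (H m Hm) as [m' [Hm' [H1 [H2 H3]]]].
    destruct (unR (unR (code_nth L m'))) as [|k] eqn:Ek; [lia|].
    exists k, m'. split; auto. rewrite (pair_components (code_nth L m')). now rewrite H1, H2, Ek.
  - intros m Hm. destruct (H m Hm) as [k [m' [Hm' Em]]]. exists m'. rewrite Em. norm_query.
    repeat split; auto; lia.
Qed.



Lemma holds_PJustCodeBase : holds A PJustCodeBase R <-> tag = 9 /\ unR arg = 0 /\ unL arg < 5.
Proof.
  unfold PJustCodeBase. rewrite !holds_PAnd, holds_PEq, holds_PEq, holds_PLt.
  unfold R. norm_query. reflexivity.
Qed.

Lemma certified_iff d :
  (exists m, m < i /\ unL (code_nth L m) = pair 9 d) <-> exists z, M (pair (pair 9 d) z).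
Proof.
  unfold M, earlier. split.
  - intros [m [Hm E]]. exists (unR (code_nth L m)), m. split; auto.
    now rewrite <- E, pair_unL_unR.
  - intros [z [m [Hm E]]]. exists m. split; auto. now rewrite E, unL_pair.
Qed.

Lemma holds_PJustCodeBin : holds A PJustCodeBin R <->
  tag = 9 /\ 4 < unL arg < 8 /\ (exists z, M (pair (pair 9 (unL (unR arg))) z)) /\
  exists z, M (pair (pair 9 (unR (unR arg))) z).
Proof.
  unfold PJustCodeBin. rewrite !holds_PAnd, holds_PEq, !holds_PLt, !holds_PCertified.
  unfold R. norm_query. rewrite !certified_iff. unfold arg, c. intuition lia.
Qed.

Lemma holds_PJustCodeMu : holds A PJustCodeMu R <->
  tag = 9 /\ unL arg = 8 /\ exists z, M (pair (pair 9 (unR arg)) z).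
Proof.
  unfold PJustCodeMu. rewrite !holds_PAnd, holds_PEq, holds_PEq, holds_PCertified.
  unfold R. norm_query. now rewrite certified_iff.
Qed.

Lemma holds_PJustified : holds A PJustified R <-> justified A M j.
Proof.
  unfold PJustified, justified. rewrite !holds_POr, !holds_PJustBase, holds_PJustPair,
    holds_PJustComp, holds_PJustRec0, holds_PJustRecS, holds_PJustMu, holds_PJustCodeBase,
    holds_PJustCodeBin, holds_PJustCodeMu.
  unfold R. norm_query. reflexivity.
Qed.
End Justification.

(* A record is [pair n L] with [L] a coded list of [n] entries. *)
Definition PValid : prf :=
  PBall (PJustified ∘ PPair (PRight ∘ PLeft) (PPair PRight (PNth (PRight ∘ PLeft) PRight)))
        PLeft.

Lemma holds_PValid A t :
  holds A PValid t <->
  forall i, i < unL t -> justified A (earlier (unR t) i) (code_nth (unR t) i).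
Proof.
  unfold PValid. rewrite holds_PBall. apply Morphisms_Prop.all_iff_morphism; intros i.
  rewrite holds_PComp. cbn [sem]. rewrite sem_PNth. cbn [sem]. simpl_pair.
  now rewrite holds_PJustified.
Qed.

Lemma valid_entry_correct A t i :
  holds A PValid t -> i < unL t -> correct_entry A (code_nth (unR t) i).
Proof.
  rewrite holds_PValid. intros Hv. induction i as [i IH] using lt_wf_ind. intros Hi.
  apply (justified_sound A (earlier (unR t) i)); auto.
  intros v [m [Hm <-]]. apply IH; lia.
Qed.

Definition justified_list (A : nat -> bool) (l : list nat) : Prop :=
  forall i, i < length l -> justified A (fun v => exists m, m < i /\ nth m l 0 = v) (nth i l 0).

Lemma justified_list_valid A l :
  justified_list A l -> holds A PValid (pair (length l) (encode_list l)).
Proof.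
  intros H. apply holds_PValid. simpl_pair. intros i Hi.
  rewrite code_nth_encode_list by auto. eapply justified_mono; [|apply H; auto].
  intros v [m [Hm E]]. exists m. split; auto. now rewrite code_nth_encode_list by lia.
Qed.

Lemma justified_list_app A l1 l2 :
  justified_list A l1 -> justified_list A l2 -> justified_list A (l1 ++ l2).
Proof.
  intros H1 H2 i Hi. rewrite length_app in Hi.
  destruct (Nat.lt_ge_cases i (length l1)) as [Hl|Hl].
  - rewrite app_nth1 by auto. eapply justified_mono; [|apply H1; auto].
    intros v [m [Hm E]]. exists m. split; auto. now rewrite app_nth1 by lia.
  - rewrite app_nth2 by auto. eapply justified_mono; [|apply H2; lia].
    intros v [m [Hm E]]. exists (length l1 + m). split; [lia|].
    rewrite app_nth2 by lia. now replace (length l1 + m - length l1) with m by lia.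
Qed.

Lemma justified_list_snoc A l j :
  justified_list A l -> justified A (fun v => In v l) j -> justified_list A (l ++ j :: nil).
Proof.
  intros Hl Hj i Hi. rewrite length_app in Hi. simpl in Hi.
  destruct (Nat.lt_ge_cases i (length l)) as [Hlt|Hge].
  - rewrite app_nth1 by auto. eapply justified_mono; [|apply Hl; auto].
    intros v [m [Hm E]]. exists m. split; auto. now rewrite app_nth1 by lia.
  - replace i with (length l) by lia. rewrite app_nth2, Nat.sub_diag by lia. simpl.
    eapply justified_mono; [|exact Hj]. intros v Hv. apply In_nth with (d := 0) in Hv.
    destruct Hv as [m [Hm E]]. exists m. split; auto. now rewrite app_nth1 by lia.
Qed.

Lemma justified_list_nil A : justified_list A nil.
Proof. intros i Hi. simpl in Hi. lia. Qed.

Definition recorded (A : nat -> bool) (j : nat) : Prop :=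
  exists l, justified_list A l /\ In j l.

Lemma recorded_snoc A l j : justified_list A l -> justified A (fun v => In v l) j -> recorded A j.
Proof.
  intros Hl Hj. exists (l ++ j :: nil). split.
  - now apply justified_list_snoc.
  - apply in_or_app. now right; left.
Qed.

Lemma recorded_all A (P : nat -> nat -> Prop) n :
  (forall m, m < n -> exists j, P m j /\ recorded A j) ->
  exists l, justified_list A l /\ forall m, m < n -> exists j, P m j /\ In j l.
Proof.
  induction n as [|n IH]; intros H.
  - exists nil. split; [apply justified_list_nil | intros; lia].
  - destruct IH as [l1 [H1 I1]]; [intros m Hm; apply H; lia|].
    destruct (H n) as [j [Pj [l2 [H2 I2]]]]; [lia|].
    exists (l1 ++ l2). split; [now apply justified_list_app|].
    intros m Hm. destruct (Nat.eq_dec m n) as [->|Hne].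
    + exists j. split; auto. apply in_or_app; auto.
    + destruct (I1 m) as [j' [Pj' Ij']]; [lia|]. exists j'. split; auto. apply in_or_app; auto.
Qed.

Lemma recorded_merge A j1 j2 :
  recorded A j1 -> recorded A j2 -> exists l, justified_list A l /\ In j1 l /\ In j2 l.
Proof.
  intros [l1 [H1 I1]] [l2 [H2 I2]]. exists (l1 ++ l2).
  split; [now apply justified_list_app | split; apply in_or_app; auto].
Qed.

Tactic Notation "justify" int(n) :=
  unfold justified; cbv zeta; simpl_pair; do n right; try left.

Lemma eval_recorded A E x y : eval A E x y -> recorded A (pair (code E) (pair x y)).
Proof.
  intros H. induction H using eval_nested_ind; simpl.
  1-5: apply (recorded_snoc A nil); [apply justified_list_nil|].
  - now justify 0.
  - now justify 1.
  - now justify 2.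
  - now justify 3.
  - now justify 4.
  - destruct (recorded_merge _ _ _ IHeval1 IHeval2) as [l [Hl [I1 I2]]].
    apply (recorded_snoc A l); auto. justify 5. repeat split; auto.
  - destruct (recorded_merge _ _ _ IHeval1 IHeval2) as [l [Hl [I1 I2]]].
    apply (recorded_snoc A l); auto. justify 6. split; eauto.
  - destruct IHeval as [l [Hl I]].
    apply (recorded_snoc A l); auto. justify 7. repeat split; auto.
  - destruct (recorded_merge _ _ _ IHeval1 IHeval2) as [l [Hl [I1 I2]]].
    apply (recorded_snoc A l); auto. justify 8. simpl. repeat split; [lia|]. eauto.
  - rename H0 into Hbelow.
    destruct (recorded_all A (fun m j => exists k, j = pair (code f) (pair (pair x m) (S k))) n)
      as [l2 [H2 I2]].
    { intros m Hm. destruct (Hbelow m Hm) as [k [_ Hk]]. eauto. }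
    destruct IHeval as [l1 [H1 I1]].
    apply (recorded_snoc A (l1 ++ l2)); [now apply justified_list_app|].
    justify 9. repeat split; [apply in_or_app; auto|].
    intros m Hm. destruct (I2 m Hm) as [j [[k ->] Ij]]. exists k. apply in_or_app; auto.
Qed.

Lemma code_recorded A E : recorded A (pair (pair 9 (code E)) 0).
Proof.
  induction E; simpl.
  1-5: apply (recorded_snoc A nil); [apply justified_list_nil | justify 10; repeat split; lia].
  1-3: destruct (recorded_merge _ _ _ IHE1 IHE2) as [l [Hl [I1 I2]]];
    apply (recorded_snoc A l); auto; justify 11; repeat split; try lia; eauto.
  destruct IHE as [l [Hl I]]. apply (recorded_snoc A l); auto. justify 12. repeat split; eauto.
Qed.

Definition witnessed (A : nat -> bool) (j s : nat) : Prop :=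
  exists t, t < s /\ holds A PValid t /\ exists i, i < unL t /\ code_nth (unR t) i = j.

Lemma witnessed_mono A j s s' : s <= s' -> witnessed A j s -> witnessed A j s'.
Proof. intros Hs [t [Ht H]]. exists t. split; auto. lia. Qed.

Lemma witnessed_correct A j s : witnessed A j s -> correct_entry A j.
Proof. intros [t [_ [Hv [i [Hi <-]]]]]. now apply valid_entry_correct. Qed.

Lemma witnessed_code_eval A c x y s : witnessed A (pair c (pair x y)) s -> code_eval A c x y.
Proof. intros H. apply correct_entry_pair. eapply witnessed_correct; eauto. Qed.

Lemma witnessed_lt A j s : witnessed A j s -> j < s.
Proof.
  intros [t [Ht [_ [i [_ <-]]]]].
  pose proof (code_nth_le (unR t) i). pose proof (unR_le t). lia.
Qed.

Lemma recorded_witnessed A j : recorded A j -> exists s, witnessed A j s.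
Proof.
  intros [l [Hl I]]. apply In_nth with (d := 0) in I. destruct I as [i [Hi Ei]].
  exists (S (pair (length l) (encode_list l))), (pair (length l) (encode_list l)).
  split; [lia|]. split; [now apply justified_list_valid|].
  exists i. simpl_pair. split; auto. now rewrite code_nth_encode_list.
Qed.

Definition PWitnessed : prf :=
  PBex (PAnd (PValid ∘ PRight)
             (PBex (PEq (PNth (PRight ∘ PRight ∘ PLeft) PRight) (PLeft ∘ PLeft ∘ PLeft))
                   (PLeft ∘ PRight)))
       PRight.

Lemma holds_PWitnessed A j s : holds A PWitnessed (pair j s) <-> witnessed A j s.
Proof.
  unfold PWitnessed, witnessed. rewrite holds_PBex. cbn [sem]. rewrite unR_pair.
  apply Morphisms_Prop.ex_iff_morphism; intros t.
  rewrite holds_PAnd, holds_PComp, holds_PBex. cbn [sem]. simpl_pair.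
  apply and_iff_compat_l, and_iff_compat_l, Morphisms_Prop.ex_iff_morphism; intros i.
  rewrite holds_PEq, sem_PNth. cbn [sem]. now simpl_pair.
Qed.


(** * Stages of the halting set *)

(* The certificate is needed because [in_jump0 n] asks [n] to be a code. *)
Definition halts_by (n s : nat) : Prop :=
  (exists y, witnessed empty_set (pair n (pair n y)) s) /\
  (exists z, witnessed empty_set (pair (pair 9 n) z) s).

(* Substituting [PZero] for the oracle makes the test independent of the oracle. *)
Definition PHaltsBy : prf :=
  subst_oracle
    (PAnd (PBex (PWitnessed ∘ PPair (PPair (PLeft ∘ PLeft) (PPair (PLeft ∘ PLeft) PRight))
                                    (PRight ∘ PLeft)) PRight)
          (PBex (PWitnessed ∘ PPair (PPair (PPair (PConst 9) (PLeft ∘ PLeft)) PRight)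
                                    (PRight ∘ PLeft)) PRight))
    PZero.

Lemma sem_PHaltsBy A x :
  sem A PHaltsBy x = Nat.b2n (nonzero (sem A PHaltsBy x)).
Proof.
  unfold PHaltsBy. rewrite sem_subst_oracle with (B := empty_set); auto; [|solve_mufree].
  now rewrite sem_PAnd, nonzero_b2n.
Qed.

Lemma witnessed_output_lt A c x y s : witnessed A (pair c (pair x y)) s -> y < s.
Proof.
  intros H. apply witnessed_lt in H.
  pose proof (add_le_pair c (pair x y)). pose proof (add_le_pair x y). lia.
Qed.

Lemma holds_PHaltsBy A n s : holds A PHaltsBy (pair n s) <-> halts_by n s.
Proof.
  unfold PHaltsBy, halts_by. rewrite holds_subst_oracle_zero by solve_mufree.
  rewrite holds_PAnd, !holds_PBex. setoid_rewrite holds_PComp. simpl_sem.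
  setoid_rewrite holds_PWitnessed.
  split.
  - intros [[y [_ Hy]] [z [_ Hz]]]. eauto.
  - intros [[y Hy] [z Hz]]. split; [exists y | exists z]; split; auto.
    + eapply witnessed_output_lt; eauto.
    + apply witnessed_lt in Hz. pose proof (add_le_pair (pair 9 n) z). lia.
Qed.

Lemma halts_by_mono n s s' : s <= s' -> halts_by n s -> halts_by n s'.
Proof. intros Hs [[y Hy] [z Hz]]. split; eexists; eapply witnessed_mono; eauto. Qed.

Lemma halts_by_sound n s : halts_by n s -> in_jump0 n.
Proof.
  intros [[y Hy] [z Hz]]. apply witnessed_code_eval in Hy.
  rewrite <- (pair_unL_unR z) in Hz. apply witnessed_code_eval, code_eval_code in Hz.
  destruct Hz as [E <-].
  exists E. split; auto. exists y. eapply code_eval_eval; eauto.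
Qed.

Lemma halts_by_complete n : in_jump0 n -> exists s, halts_by n s.
Proof.
  intros [E [<- [y Hy]]].
  destruct (recorded_witnessed _ _ (eval_recorded _ _ _ _ Hy)) as [s1 H1].
  destruct (recorded_witnessed _ _ (code_recorded empty_set E)) as [s2 H2].
  exists (s1 + s2). split; [exists y | exists 0].
  - apply (witnessed_mono _ _ s1); auto; lia.
  - apply (witnessed_mono _ _ s2); auto; lia.
Qed.

Lemma jump0_spec n : jump0 n = true <-> in_jump0 n.
Proof.
  unfold jump0. destruct (excluded_middle_informative (in_jump0 n)); split; auto; discriminate.
Qed.

Lemma halting_modulus :
  exists c, computable_in jump0 c /\ forall n, jump0 n = true -> halts_by n (c n).
Proof.
  apply (computable_in_search jump0 (POr (PNot (POracle ∘ PLeft)) PHaltsBy)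
           (fun n s => jump0 n = true -> halts_by n s)); [solve_mufree| |].
  - intros n s. rewrite holds_POr, holds_PNot, holds_PHaltsBy.
    assert (Hn : holds jump0 (POracle ∘ PLeft) (pair n s) <-> jump0 n = true).
    { rewrite holds_PComp, holds_POracle. cbn [sem]. now rewrite unL_pair. }
    rewrite Hn. split; [intros [H | H] Hj; tauto|].
    intros H. destruct (jump0 n); [right | left]; auto; discriminate.
  - intros n. destruct (jump0 n) eqn:Hn.
    + destruct (halts_by_complete n) as [s Hs]; [now apply jump0_spec|]. eauto.
    + exists 0. discriminate.
Qed.

Lemma computable_in_id A : computable_in A (fun x => x).
Proof.
  apply (computable_in_ext A (sem A PId)); [apply sem_PId | apply computable_in_sem; solve_mufree].
Qed.

Lemma jump0_turing_red_dominating A c h :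
  (forall n, jump0 n = true -> halts_by n (c n)) -> computable_in A h ->
  (forall n, c n <= h n) -> turing_red jump0 A.
Proof.
  intros Hc Hh Hle. unfold turing_red.
  apply (computable_in_ext A (fun n => sem A PHaltsBy (pair n (h n)))).
  - intros n. rewrite sem_PHaltsBy.
    enough (nonzero (sem A PHaltsBy (pair n (h n))) = jump0 n) as -> by now destruct (jump0 n).
    apply Bool.eq_true_iff_eq. rewrite <- holds_nonzero, holds_PHaltsBy, jump0_spec.
    split; [apply halts_by_sound|].
    intros Hn. apply jump0_spec, Hc in Hn. eapply halts_by_mono; eauto.
  - apply computable_in_comp; [apply computable_in_sem; solve_mufree|].
    apply computable_in_pair; auto using computable_in_id.
Qed.

(** * The diagonal argument *)

(* [0] when no output is witnessed below stage [s]. *)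
Definition stage_value (A : nat -> bool) (s e x : nat) : nat :=
  last_below (fun y => nonzero (sem A PWitnessed (pair (pair e (pair x y)) s))) s.

Definition PStageValue : prf :=
  PLast (PWitnessed ∘ PPair (PPair (PLeft ∘ PLeft ∘ PLeft)
                                   (PPair (PRight ∘ PLeft ∘ PLeft) PRight))
                            (PRight ∘ PLeft))
        PRight.

Lemma sem_PStageValue A s e x : sem A PStageValue (pair (pair e x) s) = stage_value A s e x.
Proof.
  unfold PStageValue. rewrite sem_PLast. cbn [sem]. rewrite unR_pair.
  apply last_below_ext. intros y. cbn [sem]. now simpl_pair.
Qed.

Lemma stage_value_correct A E x y s :
  eval A E x y -> witnessed A (pair (code E) (pair x y)) s -> stage_value A s (code E) x = y.
Proof.
  intros Hy Hw. unfold stage_value.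
  destruct (last_below_spec
              (fun y => nonzero (sem A PWitnessed (pair (pair (code E) (pair x y)) s))) s y)
    as [_ Hlast].
  - eapply witnessed_output_lt; eauto.
  - now apply holds_nonzero, holds_PWitnessed.
  - apply holds_nonzero, holds_PWitnessed, witnessed_code_eval in Hlast.
    eapply eval_functional; [eapply code_eval_eval; eauto | exact Hy].
Qed.

Definition stage_guess (X : nat -> bool) (c : nat -> nat) (z : nat) : nat :=
  stage_value X (c (unR z)) (unL z) z.

Lemma stage_guess_Delta02 X c :
  Delta02_set X -> computable_in jump0 c -> Delta02_fun (stage_guess X c).
Proof.
  intros HX Hc. unfold Delta02_fun.
  apply (computable_in_ext jump0 (fun z => sem X PStageValue (pair (pair (unL z) z) (c (unR z))))).
  { intros z. apply sem_PStageValue. }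
  apply computable_in_comp.
  - apply (computable_in_turing_red _ X); auto. apply computable_in_sem. solve_mufree.
  - repeat apply computable_in_pair; auto using computable_in_id.
    + exact (computable_in_sem jump0 PLeft I).
    + apply computable_in_comp; auto. exact (computable_in_sem jump0 PRight I).
Qed.

Lemma diagonalizer_outruns_modulus X c E g :
  (forall z, eval X E z (g z)) -> diagonalizing (stage_guess X c) g ->
  exists h, computable_in X h /\ forall n, c n < h n.
Proof.
  intros HE Hdiag. set (e := code E).
  destruct (computable_in_search X
    (PBex (PWitnessed ∘ PPair (PPair (PConst e)
                                     (PPair (PPair (PConst e) (PLeft ∘ PLeft)) PRight))
                              (PRight ∘ PLeft))
          PRight)
    (fun n s => witnessed X (pair e (pair (pair e n) (g (pair e n)))) s)) as [h [Hh Hw]].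
  - solve_mufree.
  - intros n s. rewrite holds_PBex. setoid_rewrite holds_PComp. simpl_sem.
    setoid_rewrite holds_PWitnessed. split.
    + intros [y [_ Hy]]. enough (y = g (pair e n)) as -> by assumption.
      eapply eval_functional; [|apply HE].
      eapply code_eval_eval; [eapply witnessed_code_eval; eauto | reflexivity].
    + intros Hs. exists (g (pair e n)). split; auto. eapply witnessed_output_lt; eauto.
  - intros n. apply recorded_witnessed, eval_recorded, HE.
  - exists h. split; auto. intros n. destruct (Nat.lt_ge_cases (c n) (h n)) as [Hlt|Hge]; auto.
    exfalso. apply (Hdiag (pair e n)). unfold stage_guess. simpl_pair.
    symmetry. apply stage_value_correct; auto. eapply witnessed_mono; eauto.
Qed.

Theorem theorem6 :
  forall X : nat -> bool,
    Delta02_set X ->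
    ~ turing_red jump0 X ->
    exists f : nat -> nat,
      Delta02_fun f /\
      forall g : nat -> nat, computable_in X g -> ~ diagonalizing f g.
Proof.
  intros X HX Hnot.
  destruct halting_modulus as [c [Hc Hmod]].
  exists (stage_guess X c). split; [now apply stage_guess_Delta02|].
  intros g [E HE] Hdiag.
  destruct (diagonalizer_outruns_modulus X c E g HE Hdiag) as [h [Hh Hlt]].
  apply Hnot, (jump0_turing_red_dominating X c h); auto.
  intros n. specialize (Hlt n). lia.
Qed.
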